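(* Let $\mathcal M=\operatorname{Diff}_{\mathcal A}(\mathbb R)\ltimes\mathcal A(\mathbb R)$ and $\widetilde{\mathcal M}=\operatorname{Diff}_{\mathcal A_1}(\mathbb R)\ltimes\mathcal A(\mathbb R)$ with multiplication $(\varphi,\alpha)(\psi,\beta)=(\varphi\circ\psi,\beta+\alpha\circ\psi)$, equipped with the right-invariant metric determined at the identity by $$G_{(\mathrm{Id},0)}((X,a),(Y,b))=\int_{\mathbb R}X'Y'+ab\,dx.$$ Then for all Lie algebra elements $(X,a)$, $$\operatorname{ad}(X,a)^*\check G(X,a)=\check G\Big(\tfrac12\Big(\int_{-\infty}^x(X'^2+a^2)\,dy+(X^2)'\Big)\,,\ a'X+aX'\Big)$$ (up to the sign conventions of the context), which lies in $\check G(\mathcal A_1(\mathbb R)\times\mathcal A(\mathbb R))$; hence the geodesic equation on $\widetilde{\mathcal M}$ exists and, for $u=\varphi_t\circ\varphi^{-1}$ and $\rho=\alpha_t\circ\varphi^{-1}$, is the two-component Hunter--Saxton system $$u_t=-uu_x+\tfrac12\int_{-\infty}^x\big(u_x(z)^2+\rho(z)^2\big)\,dz,\qquad \rho_t=-(\rho u)_x.$$ On $\mathcal M$ the geodesic equation does not exist: for $(X,a)\in\mathcal A(\mathbb R)\times\mathcal A(\mathbb R)$, $(X,a)\neq0$, one has $\operatorname{ad}(X,a)^*\check G(X,a)\notin\check G(\mathcal A(\mathbb R)\times\mathcal A(\mathbb R))$.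
   Context: $\mathcal A(\mathbb R)$ denotes any one of $C^\infty_c(\mathbb R)$, $\mathcal S(\mathbb R)$, $W^{\infty,1}(\mathbb R)$; $\mathcal A_1(\mathbb R)=\{x\mapsto\int_{-\infty}^xg\,dy: g\in\mathcal A(\mathbb R)\}$; $\operatorname{Diff}_{\mathcal A}(\mathbb R)=\{\mathrm{Id}+f: f\in\mathcal A(\mathbb R), f'>-1\}$, $\operatorname{Diff}_{\mathcal A_1}(\mathbb R)=\{\mathrm{Id}+f: f\in\mathcal A_1(\mathbb R), f'>-1\}$. The Lie algebras are $\mathcal A(\mathbb R)\times\mathcal A(\mathbb R)$ resp. $\mathcal A_1(\mathbb R)\times\mathcal A(\mathbb R)$, with adjoint action $\operatorname{ad}(X,a)(Z,c)=(X'Z-XZ',\,-Xc'+Za')$. $\check G$ maps the Lie algebra to its dual by $\langle\check G(X,a),(Z,c)\rangle=G_{(\mathrm{Id},0)}((X,a),(Z,c))$; identifying functionals with functions via the $L^2$ pairing, $\check G(X,a)=(-X'',a)$. The geodesic equation exists when $\operatorname{ad}(v)^*\check G(v)\in\check G(\mathfrak g)$ for all $v$, and then reads $v_t=-\check G^{-1}\operatorname{ad}(v)^*\check G(v)$ for the right logarithmic derivative $v=(u,\rho)$ of the curve $(\varphi,\alpha)$, which is $(\varphi_t\circ\varphi^{-1},\alpha_t\circ\varphi^{-1})$. *)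

From Stdlib Require Import Reals Lra ClassicalEpsilon.
Open Scope R_scope.

(* The derivative of f (classical; junk value 0 where f is not differentiable). *)
Definition der (f : R -> R) : R -> R :=
  fun x => epsilon (inhabits 0) (fun l => derivable_pt_lim f x l).

Definition nder (n : nat) (f : R -> R) : R -> R := Nat.iter n der f.

Definition smooth (f : R -> R) : Prop :=
  forall n x, exists l, derivable_pt_lim (nder n f) x l.

Definition lim_minf (f : R -> R) (l : R) : Prop :=
  forall eps, 0 < eps -> exists M, forall x, x < M -> Rabs (f x - l) < eps.
Definition lim_pinf (f : R -> R) (l : R) : Prop :=
  forall eps, 0 < eps -> exists M, forall x, M < x -> Rabs (f x - l) < eps.

(** * Integrals over R (for continuous integrands): the (improper) integral
    of f over R is l iff f has a primitive F with F(+oo) - F(-oo) = l. *)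
Definition has_integral (f : R -> R) (l : R) : Prop :=
  exists F : R -> R, (forall x, derivable_pt_lim F x (f x)) /\
    exists L1 L2, lim_minf F L1 /\ lim_pinf F L2 /\ l = L2 - L1.

Definition integrable (f : R -> R) : Prop := exists l, has_integral f l.

Definition integral (f : R -> R) : R :=
  epsilon (inhabits 0) (fun l => has_integral f l).

Definition prim (f : R -> R) : R -> R :=
  epsilon (inhabits (fun _ : R => 0))
    (fun F => (forall x, derivable_pt_lim F x (f x)) /\ lim_minf F 0).

Inductive Aspace := Cc | Schwartz | Winf1.

Definition inA (s : Aspace) (f : R -> R) : Prop :=
  smooth f /\
  match s with
  | Cc => exists M, forall x, M < Rabs x -> f x = 0
  | Schwartz => forall k n, exists C, forall x, Rabs (x ^ k * nder n f x) <= C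
  | Winf1 => forall n, integrable (fun x => Rabs (nder n f x))
  end.

Definition inA1 (s : Aspace) (f : R -> R) : Prop :=
  exists g, inA s g /\ (forall x, derivable_pt_lim f x (g x)) /\ lim_minf f 0.

(* G_(Id,0)((Y,b),(Z,c)) = int Y' Z' + b c  = < Gcheck(Y,b), (Z,c) > *)
Definition Gmet (Y b Z c : R -> R) : R :=
  integral (fun x => der Y x * der Z x + b x * c x).

Definition ad1 (X a Z c : R -> R) : R -> R := fun x => der X x * Z x - X x * der Z x.
Definition ad2 (X a Z c : R -> R) : R -> R := fun x => - X x * der c x + Z x * der a x.

(* < ad(X,a)^* Gcheck(X,a), (Z,c) > = G((X,a), ad(X,a)(Z,c)) *)
Definition adstarG_integrand (X a Z c : R -> R) : R -> R :=
  fun x => der X x * der (ad1 X a Z c) x + a x * ad2 X a Z c x.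
Definition adstarG (X a Z c : R -> R) : R := integral (adstarG_integrand X a Z c).

From Stdlib Require Import Reals Lra Lia ClassicalEpsilon FunctionalExtensionality Classical.
From Coquelicot Require Coquelicot.
Open Scope R_scope.

(* Pairing the Lie algebra with itself through G, the coadjoint vector ad(X,a)^* Gcheck(X,a)
   is computed by one integration by parts: it is Gcheck(Y,b) with
   Y = X X' - (1/2) int_{-oo}^x (X'^2 + a^2) and b = (aX)'.  This Y lies in A_1(R)
   but tends to -(1/2) int (X'^2 + a^2) at +oo, hence is not in A(R) unless X = a = 0.
   The remaining ingredient is that Gcheck is injective (the pairing is nondegenerate
   already against test pairs in A x A), which turns the weak identities into pointwise
   ones: the Euler--Arnold equation on Diff_{A_1} x| A becomes the two-component
   Hunter--Saxton system, and on Diff_A x| A no Gcheck(Y,b) with Y in A can match. *)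

(** * Derivatives as total functions *)

Definition D (f : R -> R) := forall x, exists l, derivable_pt_lim f x l.
Definition cont (f : R -> R) := forall x, continuity_pt f x.

Lemma der_pt f x l : derivable_pt_lim f x l -> der f x = l.
Proof.
  intro H. unfold der. assert (E : exists l, derivable_pt_lim f x l) by eauto.
  pose proof (epsilon_spec (inhabits 0) _ E) as H2. simpl in H2.
  eapply uniqueness_limite; eauto.
Qed.

Lemma der_fun f g : (forall x, derivable_pt_lim f x (g x)) -> der f = g.
Proof. intro H. extensionality x. apply der_pt, H. Qed.

Lemma D_der f : D f -> forall x, derivable_pt_lim f x (der f x).
Proof. intros H x. destruct (H x) as [l Hl]. rewrite (der_pt f x l Hl). exact Hl. Qed.

Lemma D_cont f : D f -> cont f.
Proof. intros H x. apply derivable_continuous_pt. exists (der f x). apply D_der, H. Qed.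

(* Replaces a computed derivative by an equal expression; lets [derive] produce the formal
   derivative, which is then simplified by [ring]/[field]. *)
Lemma dval f x l l' : derivable_pt_lim f x l -> l = l' -> derivable_pt_lim f x l'.
Proof. intros H ->. exact H. Qed.

Lemma dscal c f x l : derivable_pt_lim f x l -> derivable_pt_lim (fun y => c * f y) x (c * l).
Proof.
  intro H. apply (dval _ _ (0 * f x + c * l)); [|ring].
  apply derivable_pt_lim_mult; [apply derivable_pt_lim_const | exact H].
Qed.

Ltac derive :=
  repeat first [ apply derivable_pt_lim_plus | apply derivable_pt_lim_minus
               | apply derivable_pt_lim_mult | apply derivable_pt_lim_opp | apply dscal
               | apply derivable_pt_lim_const
               | match goal with H : forall y, derivable_pt_lim ?f y _
                                 |- derivable_pt_lim ?f _ _ => apply H end ].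

Lemma der_plus f g : D f -> D g -> der (fun x => f x + g x) = fun x => der f x + der g x.
Proof. intros Hf Hg. apply der_fun. intro x. apply derivable_pt_lim_plus; apply D_der; auto. Qed.
Lemma der_mult f g : D f -> D g ->
  der (fun x => f x * g x) = fun x => der f x * g x + f x * der g x.
Proof. intros Hf Hg. apply der_fun. intro x. apply derivable_pt_lim_mult; apply D_der; auto. Qed.
Lemma der_const c : der (fun _ => c) = fun _ => 0.
Proof. apply der_fun. intro. apply derivable_pt_lim_const. Qed.

Lemma const_deriv F : (forall x, derivable_pt_lim F x 0) -> forall x y, F x = F y.
Proof.
  intros H x y.
  destruct (Req_dec x y) as [->|Hne]; [reflexivity|].
  destruct (Rlt_dec x y) as [Hxy|Hyx].
  - destruct (MVT_cor2 F (fun _ => 0) x y Hxy) as [c [E _]]; [intros; apply H|lra].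
  - destruct (MVT_cor2 F (fun _ => 0) y x) as [c [E _]]; [lra|intros; apply H|lra].
Qed.

Definition nondecr (F : R -> R) := forall x y, x <= y -> F x <= F y.

Lemma mono_deriv F f : (forall x, derivable_pt_lim F x (f x)) -> (forall x, 0 <= f x) -> nondecr F.
Proof.
  intros HF Hf x y Hxy. destruct (Req_dec x y) as [->|Hne]; [lra|].
  destruct (MVT_cor2 F f x y) as [c [Hc _]]; [lra|intros; auto|].
  pose proof (Rmult_le_pos (f c) (y - x) (Hf c) ltac:(lra)). lra.
Qed.

Lemma nder_S n f : nder (S n) f = nder n (der f).
Proof. unfold nder. apply Nat.iter_succ_r. Qed.

Lemma smooth_D f : smooth f -> D f.
Proof. intros H x. apply (H 0%nat x). Qed.
Lemma smooth_der f : smooth f -> smooth (der f).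
Proof. intros H n x. rewrite <- nder_S. apply H. Qed.
Lemma smooth_nder n f : smooth f -> smooth (nder n f).
Proof. induction n; simpl; auto using smooth_der. Qed.
Lemma smooth_cont f : smooth f -> cont f.
Proof. intro H. apply D_cont, smooth_D, H. Qed.
Lemma smooth_D_der f : smooth f -> forall x, derivable_pt_lim f x (der f x).
Proof. intro H. apply D_der, smooth_D, H. Qed.

(* [Sm n h]: the first [n] derivatives of [h] exist; smoothness is [Sm n] for all [n],
   and products are handled by induction on [n] (Leibniz rule). *)
Definition Sm n h := forall k, (k <= n)%nat -> D (nder k h).

Lemma Sm_S n h : D h -> Sm n (der h) -> Sm (S n) h.
Proof. intros H1 H2 k Hk. destruct k; [exact H1|]. rewrite nder_S. apply H2. lia. Qed.
Lemma Sm_S_inv n h : Sm (S n) h -> D h /\ Sm n (der h).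
Proof.
  intro H. split; [apply (H 0%nat); lia|].
  intros k Hk. rewrite <- nder_S. apply H. lia.
Qed.
Lemma smooth_Sm h : smooth h <-> forall n, Sm n h.
Proof. split; [intros H n k _; apply smooth_D, smooth_nder, H | intros H n x; apply (H n n); lia]. Qed.

Lemma Sm_plus : forall n f g, Sm n f -> Sm n g -> Sm n (fun x => f x + g x).
Proof.
  induction n; intros f g Hf Hg.
  - intros k Hk. replace k with 0%nat by lia. intro x.
    destruct (Hf 0%nat (le_n _) x), (Hg 0%nat (le_n _) x).
    eexists. apply derivable_pt_lim_plus; eauto.
  - apply Sm_S_inv in Hf as [Hf1 Hf2]. apply Sm_S_inv in Hg as [Hg1 Hg2].
    apply Sm_S; [|rewrite der_plus by auto; apply IHn; auto].
    intro x. destruct (Hf1 x), (Hg1 x). eexists. apply derivable_pt_lim_plus; eauto.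
Qed.

Lemma smooth_plus f g : smooth f -> smooth g -> smooth (fun x => f x + g x).
Proof. rewrite !smooth_Sm. intros Hf Hg n. apply Sm_plus; auto. Qed.

Lemma smooth_mult f g : smooth f -> smooth g -> smooth (fun x => f x * g x).
Proof.
  intros Hf Hg. apply smooth_Sm. intro n. revert f g Hf Hg.
  induction n; intros f g Hf Hg.
  - intros k Hk. replace k with 0%nat by lia. intro x. eexists.
    apply derivable_pt_lim_mult; apply smooth_D_der; auto.
  - apply Sm_S.
    + intro x. eexists. apply derivable_pt_lim_mult; apply smooth_D_der; auto.
    + rewrite der_mult by (apply smooth_D; auto).
      apply Sm_plus; apply IHn; auto using smooth_der.
Qed.

Lemma nder_const n c : nder n (fun _ => c) = fun _ => if n then c else 0.
Proof. induction n; [reflexivity|]. simpl. rewrite IHn. apply der_const. Qed.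

Lemma smooth_const c : smooth (fun _ => c).
Proof. intros n x. rewrite nder_const. eexists. apply derivable_pt_lim_const. Qed.

Lemma nder_plus : forall n f g, smooth f -> smooth g ->
  nder n (fun x => f x + g x) = fun x => nder n f x + nder n g x.
Proof.
  induction n; intros f g Hf Hg; [reflexivity|].
  rewrite !nder_S, der_plus by (apply smooth_D; auto). apply IHn; apply smooth_der; auto.
Qed.

(** * Limits at -oo and +oo *)

Definition Bnd (h : R -> R) := exists B, forall x, Rabs (h x) <= B.
Definition Dec (h : R -> R) := lim_minf h 0 /\ lim_pinf h 0.

Lemma Bnd_const c : Bnd (fun _ => c).
Proof. exists (Rabs c). intro; lra. Qed.

Lemma Bnd_plus f g : Bnd f -> Bnd g -> Bnd (fun x => f x + g x).
Proof.
  intros [B1 H1] [B2 H2]. exists (B1 + B2). intro x.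
  pose proof (Rabs_triang (f x) (g x)). specialize (H1 x). specialize (H2 x). lra.
Qed.
Lemma Bnd_mult f g : Bnd f -> Bnd g -> Bnd (fun x => f x * g x).
Proof.
  intros [B1 H1] [B2 H2]. exists (B1 * B2). intro x. rewrite Rabs_mult.
  apply Rmult_le_compat; auto using Rabs_pos.
Qed.

(* Every statement about [lim_minf] is a statement about [lim_pinf] of [x |-> f (-x)]. *)
Lemma lim_minf_reflect f l : lim_minf f l <-> lim_pinf (fun x => f (- x)) l.
Proof.
  split; intros H eps He; destruct (H eps He) as [M HM]; exists (- M); intros x Hx.
  - apply HM. lra.
  - replace x with (- - x) by ring. apply HM. lra.
Qed.

Lemma lim_pinf_ext f g l : (forall x, f x = g x) -> lim_pinf f l -> lim_pinf g l.
Proof. intros E H eps He. destruct (H eps He) as [M HM]. exists M. intros. rewrite <- E. auto. Qed.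
Lemma lim_minf_ext f g l : (forall x, f x = g x) -> lim_minf f l -> lim_minf g l.
Proof. rewrite !lim_minf_reflect. intro E. apply lim_pinf_ext. auto. Qed.

Lemma lim_pinf_const c : lim_pinf (fun _ => c) c.
Proof. intros eps He. exists 0. intros. rewrite Rminus_diag, Rabs_R0. lra. Qed.
Lemma lim_minf_const c : lim_minf (fun _ => c) c.
Proof. rewrite lim_minf_reflect. apply lim_pinf_const. Qed.

Lemma lim_pinf_plus f g a b : lim_pinf f a -> lim_pinf g b -> lim_pinf (fun x => f x + g x) (a + b).
Proof.
  intros Hf Hg eps He.
  destruct (Hf (eps/2)) as [M1 H1]; [lra|]. destruct (Hg (eps/2)) as [M2 H2]; [lra|].
  exists (Rmax M1 M2). intros x Hx.
  specialize (H1 x ltac:(pose proof (Rmax_l M1 M2); lra)).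
  specialize (H2 x ltac:(pose proof (Rmax_r M1 M2); lra)).
  pose proof (Rabs_triang (f x - a) (g x - b)).
  replace (f x + g x - (a + b)) with ((f x - a) + (g x - b)) by ring. lra.
Qed.
Lemma lim_minf_plus f g a b : lim_minf f a -> lim_minf g b -> lim_minf (fun x => f x + g x) (a + b).
Proof. rewrite !lim_minf_reflect. apply lim_pinf_plus. Qed.

Lemma lim_pinf_mult0 f m : lim_pinf f 0 -> Bnd m -> lim_pinf (fun x => f x * m x) 0.
Proof.
  intros Hf [B HB] eps He.
  assert (HB0 : 0 <= B) by (specialize (HB 0); pose proof (Rabs_pos (m 0)); lra).
  destruct (Hf (eps / (B + 1))) as [M HM]; [apply Rdiv_lt_0_compat; lra|].
  exists M. intros x Hx. specialize (HM x Hx). specialize (HB x). rewrite Rminus_0_r in *.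
  rewrite Rabs_mult. pose proof (Rabs_pos (f x)).
  apply Rle_lt_trans with (Rabs (f x) * (B + 1)); [nra|].
  apply Rmult_lt_reg_r with (/ (B + 1)); [apply Rinv_0_lt_compat; lra|].
  rewrite Rmult_assoc, Rinv_r by lra. lra.
Qed.
Lemma lim_minf_mult0 f m : lim_minf f 0 -> Bnd m -> lim_minf (fun x => f x * m x) 0.
Proof.
  rewrite !lim_minf_reflect. intros Hf [B HB].
  apply lim_pinf_mult0; [exact Hf|]. exists B. auto.
Qed.

Lemma lim_pinf_scal c f a : lim_pinf f a -> lim_pinf (fun x => c * f x) (c * a).
Proof.
  intro Hf.
  assert (H0 : lim_pinf (fun x => f x + - a) 0).
  { replace 0 with (a + - a) by ring. apply lim_pinf_plus; auto using lim_pinf_const. }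
  pose proof (lim_pinf_plus _ _ _ _ (lim_pinf_mult0 _ _ H0 (Bnd_const c))
                (lim_pinf_const (c * a))) as H.
  rewrite Rplus_0_l in H. eapply lim_pinf_ext; [|exact H]. intro; simpl; ring.
Qed.
Lemma lim_minf_scal c f a : lim_minf f a -> lim_minf (fun x => c * f x) (c * a).
Proof. rewrite !lim_minf_reflect. apply lim_pinf_scal. Qed.

Lemma Dec_plus f g : Dec f -> Dec g -> Dec (fun x => f x + g x).
Proof.
  intros [H1 H2] [G1 G2].
  split; replace 0 with (0 + 0) by ring; [apply lim_minf_plus | apply lim_pinf_plus]; auto.
Qed.
Lemma Dec_mult f m : Dec f -> Bnd m -> Dec (fun x => f x * m x).
Proof. intros [H1 H2] Hm. split; [apply lim_minf_mult0 | apply lim_pinf_mult0]; auto. Qed.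

Lemma lim_pinf_unique f a b : lim_pinf f a -> lim_pinf f b -> a = b.
Proof.
  intros Ha Hb. destruct (Req_dec a b) as [|Hne]; auto. exfalso.
  assert (Hd : 0 < Rabs (a - b) / 2) by (apply Rdiv_lt_0_compat; [apply Rabs_pos_lt; lra|lra]).
  destruct (Ha _ Hd) as [M1 H1]. destruct (Hb _ Hd) as [M2 H2].
  set (y := Rmax M1 M2 + 1).
  specialize (H1 y ltac:(unfold y; pose proof (Rmax_l M1 M2); lra)).
  specialize (H2 y ltac:(unfold y; pose proof (Rmax_r M1 M2); lra)).
  pose proof (Rabs_triang (a - f y) (f y - b)) as T.
  replace (a - f y + (f y - b)) with (a - b) in T by ring.
  rewrite Rabs_minus_sym in H1. lra.
Qed.
Lemma lim_minf_unique f a b : lim_minf f a -> lim_minf f b -> a = b.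
Proof. rewrite !lim_minf_reflect. apply lim_pinf_unique. Qed.

Lemma lim_pinf_abs h l : lim_pinf h l -> lim_pinf (fun x => Rabs (h x)) (Rabs l).
Proof.
  intros H eps He. destruct (H eps He) as [M HM]. exists M. intros x Hx.
  pose proof (Rabs_triang_inv2 (h x) l). specialize (HM x Hx). lra.
Qed.
Lemma lim_minf_abs h l : lim_minf h l -> lim_minf (fun x => Rabs (h x)) (Rabs l).
Proof. rewrite !lim_minf_reflect. apply lim_pinf_abs. Qed.

Lemma const_lim0 W : (forall x, derivable_pt_lim W x 0) -> lim_minf W 0 -> forall x, W x = 0.
Proof.
  intros HW Hl x. pose proof (const_deriv W HW) as E.
  assert (Hc : lim_minf W (W 0)).
  { apply (lim_minf_ext (fun _ => W 0)); [intro; symmetry; apply E | apply lim_minf_const]. }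
  rewrite (E x 0). eapply lim_minf_unique; eauto.
Qed.

(** * Improper integrals over the line *)

Section Primitive.
Import Coquelicot.Coquelicot.

Lemma prim_ex f : cont f -> exists F, forall x, derivable_pt_lim F x (f x).
Proof.
  intro Hc. exists (fun x => RInt f 0 x). intro x.
  apply is_derive_Reals, (is_derive_RInt f (fun x => RInt f 0 x) 0 x).
  - apply filter_forall. intro y. apply (@RInt_correct R_CompleteNormedModule).
    apply ex_RInt_continuous. intros z _. apply continuity_pt_filterlim, Hc.
  - apply continuity_pt_filterlim, Hc.
Qed.

End Primitive.

Lemma prim_unique F G f : (forall x, derivable_pt_lim F x (f x)) -> (forall x, derivable_pt_lim G x (f x)) ->
  forall x, F x = G x + (F 0 - G 0).
Proof.
  intros HF HG x.
  assert (H : forall x, derivable_pt_lim (fun y => F y - G y) x 0).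
  { intro z. replace 0 with (f z - f z) by ring. apply derivable_pt_lim_minus; auto. }
  pose proof (const_deriv _ H x 0). lra.
Qed.

Lemma mono_lim_pinf F B : nondecr F -> (forall x, F x <= B) -> exists L, lim_pinf F L.
Proof.
  intros HF HB. set (E := fun y => exists x, y = F x).
  destruct (completeness E) as [L [HL1 HL2]].
  - exists B. intros y [x ->]. auto.
  - exists (F 0), 0. reflexivity.
  - exists L. intros eps He.
    destruct (classic (exists x0, L - eps < F x0)) as [[x0 Hx0]|Hn].
    + exists x0. intros x Hx. pose proof (HF x0 x ltac:(lra)).
      assert (F x <= L) by (apply HL1; exists x; auto).
      rewrite Rabs_left1 by lra. lra.
    + assert (L <= L - eps); [|lra]. apply HL2. intros y [x ->].
      apply Rnot_lt_le. intro. apply Hn. eauto.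
Qed.

Lemma mono_lim_minf F b : nondecr F -> (forall x, b <= F x) -> exists L, lim_minf F L.
Proof.
  intros HF Hb. destruct (mono_lim_pinf (fun x => - F (- x)) (- b)) as [L HL].
  - intros x y Hxy. pose proof (HF (-y) (-x) ltac:(lra)). lra.
  - intro x. pose proof (Hb (-x)). lra.
  - exists (- L). rewrite lim_minf_reflect.
    apply (lim_pinf_ext (fun x => -1 * - F (- x))); [intro; ring|].
    replace (- L) with (-1 * L) by ring. apply lim_pinf_scal, HL.
Qed.

Lemma mono_le_lim F L : nondecr F -> lim_pinf F L -> forall x, F x <= L.
Proof.
  intros HF HL x. apply Rnot_lt_le. intro H. destruct (HL (F x - L)) as [M HM]; [lra|].
  specialize (HM (Rmax M x + 1) ltac:(pose proof (Rmax_l M x); lra)).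
  pose proof (HF x (Rmax M x + 1) ltac:(pose proof (Rmax_r M x); lra)).
  rewrite Rabs_right in HM by lra. lra.
Qed.
Lemma mono_ge_lim F L : nondecr F -> lim_minf F L -> forall x, L <= F x.
Proof.
  intros HF HL x. rewrite lim_minf_reflect in HL.
  assert (Hm : nondecr (fun y => - F (- y))) by (intros y z Hyz; pose proof (HF (-z) (-y)); lra).
  pose proof (mono_le_lim _ (- L) Hm) as H.
  assert (lim_pinf (fun y => - F (- y)) (- L)).
  { apply (lim_pinf_ext (fun y => -1 * F (- y))); [intro; ring|].
    replace (- L) with (-1 * L) by ring. apply lim_pinf_scal, HL. }
  specialize (H ltac:(assumption) (- x)). cbv beta in H. rewrite Ropp_involutive in H. lra.
Qed.

Lemma hasint_prim f l F : has_integral f l -> (forall x, derivable_pt_lim F x (f x)) ->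
  exists L1 L2, lim_minf F L1 /\ lim_pinf F L2 /\ l = L2 - L1.
Proof.
  intros [G [HG [L1 [L2 [H1 [H2 ->]]]]]] HF.
  pose proof (prim_unique F G f HF HG) as E. set (k := F 0 - G 0) in E.
  exists (L1 + k), (L2 + k). split; [|split; [|ring]].
  - eapply lim_minf_ext; [intro x; symmetry; apply E|]. apply lim_minf_plus; auto using lim_minf_const.
  - eapply lim_pinf_ext; [intro x; symmetry; apply E|]. apply lim_pinf_plus; auto using lim_pinf_const.
Qed.

Lemma hasint_unique f a b : has_integral f a -> has_integral f b -> a = b.
Proof.
  intros [F [HF [L1 [L2 [H1 [H2 ->]]]]]] Hb.
  destruct (hasint_prim f b F Hb HF) as [K1 [K2 [G1 [G2 ->]]]].
  rewrite (lim_minf_unique F L1 K1), (lim_pinf_unique F L2 K2); auto.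
Qed.

Lemma integral_eq f l : has_integral f l -> integral f = l.
Proof.
  intro H. unfold integral. assert (E : exists l, has_integral f l) by eauto.
  pose proof (epsilon_spec (inhabits 0) _ E) as H2. simpl in H2. eapply hasint_unique; eauto.
Qed.

Lemma integrable_has f : integrable f -> has_integral f (integral f).
Proof. intros [l H]. rewrite (integral_eq f l H). exact H. Qed.

Lemma hasint_der P p L1 L2 : (forall x, derivable_pt_lim P x (p x)) -> lim_minf P L1 -> lim_pinf P L2 ->
  has_integral p (L2 - L1).
Proof. intros. exists P. split; auto. exists L1, L2. auto. Qed.

Lemma hasint_ext f g l : (forall x, f x = g x) -> has_integral f l -> has_integral g l.
Proof. intros E H. replace g with f; auto. extensionality x. auto. Qed.

Lemma hasint_plus f g a b : has_integral f a -> has_integral g b -> has_integral (fun x => f x + g x) (a + b).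
Proof.
  intros [F [HF [L1 [L2 [H1 [H2 ->]]]]]] [G [HG [K1 [K2 [G1 [G2 ->]]]]]].
  replace (L2 - L1 + (K2 - K1)) with ((L2 + K2) - (L1 + K1)) by ring.
  apply (hasint_der (fun x => F x + G x)); [intro; derive | apply lim_minf_plus | apply lim_pinf_plus]; auto.
Qed.
Lemma hasint_scal c f a : has_integral f a -> has_integral (fun x => c * f x) (c * a).
Proof.
  intros [F [HF [L1 [L2 [H1 [H2 ->]]]]]]. replace (c * (L2 - L1)) with (c * L2 - c * L1) by ring.
  apply (hasint_der (fun x => c * F x)); [intro; derive | apply lim_minf_scal | apply lim_pinf_scal]; auto.
Qed.

Lemma Rabs_le_bounds x B : Rabs x <= B -> - B <= x <= B.
Proof. intro H. pose proof (Rle_abs x). pose proof (Rle_abs (- x)). rewrite Rabs_Ropp in *. lra. Qed.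

Lemma hasint_of_bnd_prim F f B : (forall x, derivable_pt_lim F x (f x)) -> (forall x, 0 <= f x) ->
  (forall x, Rabs (F x) <= B) -> integrable f.
Proof.
  intros HF Hf HB. pose proof (mono_deriv F f HF Hf) as Hm.
  assert (HB' : forall x, - B <= F x <= B) by (intro x; apply Rabs_le_bounds, HB).
  destruct (mono_lim_pinf F B Hm) as [L2 H2]; [intro x; apply HB'|].
  destruct (mono_lim_minf F (- B) Hm) as [L1 H1]; [intro x; apply HB'|].
  exists (L2 - L1). apply (hasint_der F); auto.
Qed.

Lemma hasint_minus f g a b : has_integral f a -> has_integral g b -> has_integral (fun x => f x - g x) (a - b).
Proof.
  intros Hf Hg. replace (a - b) with (a + -1 * b) by ring.
  apply (hasint_ext (fun x => f x + -1 * g x)); [intro; ring|]. apply hasint_plus; auto using hasint_scal.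
Qed.

Lemma cont_abs f : cont f -> cont (fun x => Rabs (f x)).
Proof. intros H x. apply (continuity_pt_comp f Rabs); [apply H | apply Rcontinuity_abs]. Qed.

Lemma comparison h g l : cont h -> (forall x, 0 <= h x <= g x) -> has_integral g l -> integrable h.
Proof.
  intros Hc Hhg [G [HG [L1 [L2 [H1 [H2 ->]]]]]]. destruct (prim_ex h Hc) as [F HF].
  assert (HGm : nondecr G) by (apply (mono_deriv G g); auto; intro x; specialize (Hhg x); lra).
  assert (HFm : nondecr F) by (apply (mono_deriv F h); auto; intro x; specialize (Hhg x); lra).
  assert (HD : nondecr (fun x => G x - F x)).
  { apply (mono_deriv _ (fun x => g x - h x)); [intro; derive|intro x; specialize (Hhg x); lra]. }
  (* [F] moves less than [G] on every interval, and [G] moves at most [L2 - L1] in total. *)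
  apply (hasint_of_bnd_prim F h (Rabs (F 0) + (L2 - L1))); auto; [intro x; specialize (Hhg x); lra|].
  intro x. pose proof (mono_le_lim G L2 HGm H2). pose proof (mono_ge_lim G L1 HGm H1).
  pose proof (Rle_abs (F 0)). pose proof (Rle_abs (- F 0)). rewrite Rabs_Ropp in *.
  apply Rabs_le. destruct (Rle_dec 0 x).
  - pose proof (HD 0 x r). pose proof (HFm 0 x r). pose proof (H x). pose proof (H0 0). cbv beta in *. lra.
  - pose proof (HD x 0 ltac:(lra)). pose proof (HFm x 0 ltac:(lra)). pose proof (H 0). pose proof (H0 x).
    cbv beta in *. lra.
Qed.

Definition Intb (h : R -> R) := integrable (fun x => Rabs (h x)).

(* Absolutely integrable continuous functions are integrable:
   [h = |h| - (|h| - h)] with [0 <= |h| - h <= 2|h|]. *)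
Lemma Intb_integrable h : cont h -> Intb h -> integrable h.
Proof.
  intros Hc [l Hl].
  destruct (comparison (fun x => Rabs (h x) - h x) (fun x => 2 * Rabs (h x)) (2 * l)) as [l2 H2].
  - intro x. apply continuity_pt_minus; [apply cont_abs|]; auto.
  - intro x. pose proof (Rle_abs (h x)). pose proof (Rle_abs (- h x)). rewrite Rabs_Ropp in *. lra.
  - apply hasint_scal, Hl.
  - exists (l + -1 * l2). apply (hasint_ext (fun x => Rabs (h x) + -1 * (Rabs (h x) - h x))); [intro; ring|].
    apply hasint_plus; [|apply hasint_scal]; auto.
Qed.

Lemma nonneg_zero q : cont q -> (forall x, 0 <= q x) -> has_integral q 0 -> forall x, q x = 0.
Proof.
  intros Hc Hq [F [HF [L1 [L2 [H1 [H2 Hl]]]]]] x.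
  assert (Hm : nondecr F) by (apply (mono_deriv F q); auto).
  assert (E : F = fun _ => L1).
  { extensionality y. pose proof (mono_le_lim F L2 Hm H2 y). pose proof (mono_ge_lim F L1 Hm H1 y). lra. }
  pose proof (HF x) as Hx. rewrite E in Hx. eapply uniqueness_limite; [exact Hx|apply derivable_pt_lim_const].
Qed.

Lemma sq_zero f : cont f -> has_integral (fun x => f x * f x) 0 -> forall x, f x = 0.
Proof.
  intros Hc H x. assert (f x * f x = 0); [|nra].
  apply (nonneg_zero (fun x => f x * f x)); auto; [intro y; apply continuity_pt_mult; auto | intro; nra].
Qed.

Lemma int_lim_pinf0 f L : (forall x, 0 <= f x) -> integrable f -> lim_pinf f L -> L = 0.
Proof.
  intros Hp [l [F [HF [K1 [K2 [H1 [H2 _]]]]]]] HL.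
  assert (Hm : nondecr F) by (apply (mono_deriv F f); auto).
  assert (HL0 : 0 <= L).
  { apply Rnot_lt_le. intro. destruct (HL (- L)) as [M HM]; [lra|].
    specialize (HM (M + 1) ltac:(lra)). specialize (Hp (M + 1)). rewrite Rabs_right in HM by lra. lra. }
  destruct (Req_dec L 0) as [|Hne]; auto. exfalso.
  (* beyond [M], [f >= L/2], so [F] grows past its limit [K2] *)
  destruct (HL (L / 2)) as [M HM]; [lra|].
  set (a := M + 1). set (b := a + 2 * (K2 - F a) / L + 1).
  assert (F a <= K2) by (apply (mono_le_lim F); auto).
  assert (0 <= 2 * (K2 - F a) / L) by (apply Rmult_le_pos; [lra|left; apply Rinv_0_lt_compat; lra]).
  destruct (MVT_cor2 F f a b) as [c [Hc1 Hc2]]; [unfold b; lra|intros; auto|].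
  specialize (HM c ltac:(unfold a in Hc2; lra)). apply Rabs_def2 in HM.
  assert (F b - F a >= L / 2 * (b - a)) by (rewrite Hc1; apply Rle_ge, Rmult_le_compat_r; unfold b; lra).
  assert (L / 2 * (b - a) = (K2 - F a) + L / 2) by (unfold b; field; lra).
  pose proof (mono_le_lim F K2 Hm H2 b). lra.
Qed.

Lemma hasint_reflect f l : has_integral f l -> has_integral (fun x => f (- x)) l.
Proof.
  intros [F [HF [L1 [L2 [H1 [H2 ->]]]]]].
  replace (L2 - L1) with (- L1 - - L2) by ring.
  apply (hasint_der (fun x => - F (- x))).
  - intro x. apply (dval _ _ (- (f (- x) * -1))); [|ring]. apply derivable_pt_lim_opp.
    apply (derivable_pt_lim_comp Ropp F x (-1) (f (- x))); [|apply HF].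
    apply (dval _ _ (- 1)); [apply derivable_pt_lim_opp, derivable_pt_lim_id | ring].
  - rewrite lim_minf_reflect. apply (lim_pinf_ext (fun x => -1 * F x)); [intro; rewrite Ropp_involutive; ring|].
    replace (- L2) with (-1 * L2) by ring. apply lim_pinf_scal, H2.
  - rewrite lim_minf_reflect in H1. apply (lim_pinf_ext (fun x => -1 * F (- x))); [intro; ring|].
    replace (- L1) with (-1 * L1) by ring. apply lim_pinf_scal, H1.
Qed.

Lemma int_lim_minf0 f L : (forall x, 0 <= f x) -> integrable f -> lim_minf f L -> L = 0.
Proof.
  intros Hp [l Hl]. rewrite lim_minf_reflect.
  apply int_lim_pinf0; [intro; apply Hp | exists l; apply hasint_reflect, Hl].
Qed.

(* A function whose value and derivative are absolutely integrable vanishes at infinity: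
   it has limits at both ends (its derivative is integrable), which must be 0. *)
Lemma Dec_of_int h : D h -> cont (der h) -> Intb h -> Intb (der h) -> Dec h.
Proof.
  intros HD Hc' Hi Hi'.
  destruct (Intb_integrable (der h) Hc' Hi') as [l Hl].
  destruct (hasint_prim (der h) l h Hl (D_der h HD)) as [L1 [L2 [H1 [H2 _]]]].
  assert (E1 : Rabs L1 = 0) by (apply (int_lim_minf0 (fun x => Rabs (h x))); auto using Rabs_pos, lim_minf_abs).
  assert (E2 : Rabs L2 = 0) by (apply (int_lim_pinf0 (fun x => Rabs (h x))); auto using Rabs_pos, lim_pinf_abs).
  destruct (Req_dec L1 0) as [->|N1]; [|exfalso; exact (Rabs_no_R0 _ N1 E1)].
  destruct (Req_dec L2 0) as [->|N2]; [|exfalso; exact (Rabs_no_R0 _ N2 E2)].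
  split; auto.
Qed.

Lemma lim_bnd f L1 L2 : cont f -> lim_minf f L1 -> lim_pinf f L2 -> Bnd f.
Proof.
  intros Hc H1 H2. destruct (H1 1 ltac:(lra)) as [M1 HM1]. destruct (H2 1 ltac:(lra)) as [M2 HM2].
  set (a := Rmin M1 M2). set (b := Rmax M1 M2).
  assert (a <= b) by (unfold a, b; pose proof (Rmin_l M1 M2); pose proof (Rmax_l M1 M2); lra).
  destruct (continuity_ab_maj f a b H) as [x1 [Hx1 _]]; [intros; auto|].
  destruct (continuity_ab_maj (fun x => - f x) a b H) as [x2 [Hx2 _]]; [intros; apply continuity_pt_opp; auto|].
  exists (Rabs (f x1) + Rabs (f x2) + Rabs L1 + Rabs L2 + 1). intro x.
  pose proof (Rabs_pos (f x1)). pose proof (Rabs_pos (f x2)). pose proof (Rabs_pos L1). pose proof (Rabs_pos L2).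
  destruct (Rlt_dec x M1) as [h1|h1].
  { specialize (HM1 x h1). pose proof (Rabs_triang (f x - L1) L1) as T.
    replace (f x - L1 + L1) with (f x) in T by ring. lra. }
  destruct (Rlt_dec M2 x) as [h2|h2].
  { specialize (HM2 x h2). pose proof (Rabs_triang (f x - L2) L2) as T.
    replace (f x - L2 + L2) with (f x) in T by ring. lra. }
  assert (Hx : a <= x <= b) by (unfold a, b; pose proof (Rmin_l M1 M2); pose proof (Rmax_r M1 M2); lra).
  specialize (Hx1 x Hx). specialize (Hx2 x Hx). apply Rabs_le.
  pose proof (Rle_abs (f x1)). pose proof (Rle_abs (- f x2)) as T. rewrite Rabs_Ropp in T. lra.
Qed.

Lemma prim_spec f : cont f -> integrable f ->
  (forall x, derivable_pt_lim (prim f) x (f x)) /\ lim_minf (prim f) 0 /\ lim_pinf (prim f) (integral f).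
Proof.
  intros Hc Hi. pose proof (integrable_has f Hi) as Hl.
  assert (E : exists F, (forall x, derivable_pt_lim F x (f x)) /\ lim_minf F 0).
  { destruct (prim_ex f Hc) as [F HF]. destruct (hasint_prim f _ F Hl HF) as [L1 [L2 [H1 [H2 _]]]].
    exists (fun x => F x + - L1). split; [intro x; apply (dval _ _ (f x + 0)); [derive|ring]|].
    replace 0 with (L1 + - L1) by ring. apply lim_minf_plus; auto using lim_minf_const. }
  pose proof (epsilon_spec (inhabits (fun _ : R => 0)) _ E) as [H1 H2]. fold (prim f) in H1, H2.
  split; auto. split; auto.
  destruct (hasint_prim f _ _ Hl H1) as [K1 [K2 [G1 [G2 Hk]]]].
  assert (K1 = 0) by (eapply lim_minf_unique; eauto). subst K1. replace (integral f) with K2 by lra. exact G2.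
Qed.

Lemma lim_pinf_of_weighted h C : (forall x, Rabs (x * h x) <= C) -> lim_pinf h 0.
Proof.
  intros HC eps He. assert (HC0 : 0 <= C) by (pose proof (HC 0); pose proof (Rabs_pos (0 * h 0)); lra).
  exists (C / eps + 1). intros x Hx.
  assert (0 <= C / eps) by (apply Rmult_le_pos; [lra|left; apply Rinv_0_lt_compat; lra]).
  specialize (HC x). rewrite Rabs_mult, (Rabs_right x) in HC by lra. rewrite Rminus_0_r.
  apply Rmult_lt_reg_l with x; [lra|].
  apply Rle_lt_trans with C; [exact HC|].
  apply Rmult_lt_reg_l with (/ eps); [apply Rinv_0_lt_compat; lra|].
  replace (/ eps * (x * eps)) with x by (field; lra). unfold Rdiv in *. lra.
Qed.

Lemma Dec_of_weighted h C : (forall x, Rabs (x * h x) <= C) -> Dec h.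
Proof.
  intro HC. split; [rewrite lim_minf_reflect|]; apply (lim_pinf_of_weighted _ C); auto.
  intro x. rewrite <- Rabs_Ropp. replace (- (x * h (- x))) with (- x * h (- x)) by ring. apply HC.
Qed.

(* [(1 + x^2) |h(x)| <= C] makes [h] absolutely integrable (compare with [C / (1 + x^2)]). *)
Lemma Intb_of_weighted h C : cont h -> (forall x, (1 + x ^ 2) * Rabs (h x) <= C) -> Intb h.
Proof.
  intros Hc HC. assert (HC0 : 0 <= C) by (pose proof (HC 0); pose proof (Rabs_pos (h 0)); nra).
  assert (Hpos : forall x, 0 < 1 + x ^ 2) by (intro x; pose proof (pow2_ge_0 x); lra).
  destruct (hasint_of_bnd_prim (fun x => C * atan x) (fun x => C * / (1 + x ^ 2)) (C * PI)) as [l Hl].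
  - intro x. apply dscal, derivable_pt_lim_atan.
  - intro x. apply Rmult_le_pos; [lra|left; apply Rinv_0_lt_compat, Hpos].
  - intro x. rewrite Rabs_mult, Rabs_right by lra. apply Rmult_le_compat_l; [lra|].
    pose proof (atan_bound x). pose proof PI_RGT_0. apply Rabs_le. lra.
  - apply (comparison _ (fun x => C * / (1 + x ^ 2)) l (cont_abs h Hc)); [|exact Hl].
    intro x. split; [apply Rabs_pos|].
    apply Rmult_le_reg_l with (1 + x ^ 2); [apply Hpos|].
    replace ((1 + x ^ 2) * (C * / (1 + x ^ 2))) with C by (field; specialize (Hpos x); lra). apply HC.
Qed.

Definition weighted_bound (h : R -> R) :=
  exists C, forall x, Rabs (h x) <= C /\ Rabs (x * h x) <= C /\ Rabs (x ^ 2 * h x) <= C.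

Lemma weighted_Dec_Intb h : cont h -> weighted_bound h -> Dec h /\ Intb h.
Proof.
  intros Hc [C HC]. split; [apply (Dec_of_weighted h C); apply HC|].
  apply (Intb_of_weighted h (2 * C)); auto. intro x. destruct (HC x) as [H0 [_ H2]].
  rewrite Rabs_mult, (Rabs_right (x ^ 2)) in H2 by (apply Rle_ge, pow2_ge_0). lra.
Qed.

Lemma compact_support_weighted h M : cont h -> (forall x, M < Rabs x -> h x = 0) -> weighted_bound h.
Proof.
  intros Hc HM. set (K := Rabs M + 1).
  assert (HK : M < K) by (unfold K; pose proof (Rle_abs M); lra).
  destruct (continuity_ab_maj (fun x => Rabs (h x)) (- K) K) as [x1 [Hx1 _]];
    [unfold K; pose proof (Rabs_pos M); lra | intros; apply cont_abs; auto|].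
  set (B := Rabs (h x1)). exists (B * K ^ 2 + B). intro x.
  assert (HB0 : 0 <= B) by apply Rabs_pos.
  assert (HK1 : 1 <= K) by (unfold K; pose proof (Rabs_pos M); lra).
  destruct (Rle_dec (Rabs x) K) as [Hx|Hx].
  - assert (Hhx : Rabs (h x) <= B) by (apply Hx1; apply Rabs_le_bounds in Hx; lra).
    pose proof (Rabs_pos x) as H. pose proof (Rabs_pos (h x)) as H0.
    rewrite !Rabs_mult, <- RPow_abs.
    assert (Hx2 : Rabs x ^ 2 <= K ^ 2) by (apply pow_incr; lra).
    pose proof (Rmult_le_compat _ _ _ _ H H0 Hx Hhx) as P1.
    pose proof (Rmult_le_compat _ _ _ _ (pow2_ge_0 (Rabs x)) H0 Hx2 Hhx) as P2.
    assert (HKK : K <= K ^ 2) by (simpl; nra).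
    pose proof (Rmult_le_compat_r B _ _ HB0 HKK).
    pose proof (pow2_ge_0 K). repeat split; nra.
  - rewrite HM by lra. rewrite !Rmult_0_r, Rabs_R0. pose proof (Rmult_le_pos _ _ HB0 (pow2_ge_0 K)). repeat split; lra.
Qed.

(** * The spaces A(R) and A_1(R) *)

Definition Cs (s : Aspace) (h : R -> R) : Prop :=
  match s with
  | Cc => exists M, forall x, M < Rabs x -> h x = 0
  | Schwartz => forall k, exists C, forall x, Rabs (x ^ k * h x) <= C
  | Winf1 => Intb h
  end.

Lemma supp_der h M : (forall x, M < Rabs x -> h x = 0) -> forall x, M < Rabs x -> der h x = 0.
Proof.
  intros H x Hx. apply der_pt. intros eps He.
  assert (Hd : 0 < Rabs x - M) by lra. exists (mkposreal _ Hd). intros t Ht0 Ht. simpl in Ht.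
  assert (M < Rabs (x + t)).
  { pose proof (Rabs_triang_inv x (- t)) as T. rewrite Rabs_Ropp in T.
    replace (x - - t) with (x + t) in T by ring. lra. }
  rewrite (H x Hx), (H (x + t)) by auto. replace ((0 - 0) / t - 0) with 0 by (field; auto). rewrite Rabs_R0. lra.
Qed.

Lemma inA_iff s f : inA s f <-> smooth f /\ forall n, Cs s (nder n f).
Proof.
  destruct s; unfold inA, Cs; split; intros [Hs H]; split; auto.
  - destruct H as [M HM]. intro n. exists M. induction n; [exact HM|].
    simpl. apply (supp_der _ M); auto.
  - apply (H 0%nat).
Qed.

Lemma Cs_Dec_Intb s h : D h -> cont (der h) -> Cs s h -> Cs s (der h) -> Dec h /\ Intb h.
Proof.
  intros HD Hc' H1 H2. pose proof (D_cont h HD) as Hc. destruct s; simpl in H1, H2.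
  - destruct H1 as [M HM]. apply weighted_Dec_Intb; auto. eapply compact_support_weighted; eauto.
  - apply weighted_Dec_Intb; auto.
    destruct (H1 0%nat) as [C0 HC0], (H1 1%nat) as [C1 HC1], (H1 2%nat) as [C2 HC2].
    exists (C0 + C1 + C2). intro x. specialize (HC0 x). specialize (HC1 x). specialize (HC2 x).
    rewrite pow_O, Rmult_1_l in HC0. rewrite pow_1 in HC1.
    pose proof (Rabs_pos (h x)). pose proof (Rabs_pos (x * h x)). pose proof (Rabs_pos (x ^ 2 * h x)).
    repeat split; lra.
  - split; auto. apply Dec_of_int; auto.
Qed.

Lemma Cs_plus s h g : cont h -> cont g -> Cs s h -> Cs s g -> Cs s (fun x => h x + g x).
Proof.
  destruct s; simpl; intros Hh Hg H1 H2.
  - destruct H1 as [M1 HM1], H2 as [M2 HM2]. exists (Rmax M1 M2). intros x Hx.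
    rewrite HM1, HM2; [ring| |]; [pose proof (Rmax_r M1 M2) | pose proof (Rmax_l M1 M2)]; lra.
  - intro k. destruct (H1 k) as [C1 HC1], (H2 k) as [C2 HC2]. exists (C1 + C2). intro x.
    rewrite Rmult_plus_distr_l. pose proof (Rabs_triang (x ^ k * h x) (x ^ k * g x)).
    specialize (HC1 x). specialize (HC2 x). lra.
  - destruct H1 as [l1 Hl1], H2 as [l2 Hl2].
    apply (comparison _ (fun x => Rabs (h x) + Rabs (g x)) (l1 + l2)).
    + apply cont_abs. intro x. apply continuity_pt_plus; auto.
    + intro x. split; [apply Rabs_pos | apply Rabs_triang].
    + apply hasint_plus; auto.
Qed.

Lemma Cs_mult s h m : cont h -> cont m -> Bnd m -> Cs s h -> Cs s (fun x => h x * m x).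
Proof.
  intros Hh Hm [B HB]. assert (HB0 : 0 <= B) by (specialize (HB 0); pose proof (Rabs_pos (m 0)); lra).
  destruct s; simpl; intros H1.
  - destruct H1 as [M HM]. exists M. intros x Hx. rewrite HM by auto. ring.
  - intro k. destruct (H1 k) as [C HC]. exists (C * B). intro x.
    replace (x ^ k * (h x * m x)) with ((x ^ k * h x) * m x) by ring. rewrite Rabs_mult.
    apply Rmult_le_compat; auto using Rabs_pos.
  - destruct H1 as [l Hl]. apply (comparison _ (fun x => B * Rabs (h x)) (B * l)).
    + apply cont_abs. intro x. apply continuity_pt_mult; auto.
    + intro x. split; [apply Rabs_pos|]. rewrite Rabs_mult, Rmult_comm.
      apply Rmult_le_compat_r; auto using Rabs_pos.
    + apply hasint_scal; auto.
Qed.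

Lemma Cs_zero s : Cs s (fun _ => 0).
Proof.
  destruct s; simpl.
  - exists 0. auto.
  - intro k. exists 0. intro x. rewrite Rmult_0_r, Rabs_R0. lra.
  - exists (0 - 0). apply (hasint_ext (fun _ => 0)); [intro; rewrite Rabs_R0; auto|].
    apply (hasint_der (fun _ => 0)); [intro; apply derivable_pt_lim_const | apply lim_minf_const | apply lim_pinf_const].
Qed.

(* Multipliers of [A s]: smooth functions all of whose derivatives are bounded. *)
Definition Mc (m : R -> R) := smooth m /\ forall n, Bnd (nder n m).

Lemma Mc_Bnd m : Mc m -> Bnd m.
Proof. intros [_ H]. apply (H 0%nat). Qed.
Lemma Mc_der m : Mc m -> Mc (der m).
Proof. intros [Hs HB]. split; [apply smooth_der; auto|]. intro n. rewrite <- nder_S. auto. Qed.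
Lemma Mc_const c : Mc (fun _ => c).
Proof.
  split; [apply smooth_const|]. intro n. rewrite nder_const.
  exists (Rabs c). intro x. destruct n; rewrite ?Rabs_R0; pose proof (Rabs_pos c); lra.
Qed.

Lemma A_smooth s f : inA s f -> smooth f.
Proof. intro H. apply inA_iff in H. tauto. Qed.

Lemma A_props s f : inA s f -> forall n,
  Dec (nder n f) /\ Intb (nder n f) /\ Bnd (nder n f) /\ cont (nder n f).
Proof.
  intros H n. apply inA_iff in H as [Hs HC].
  assert (Hc : cont (nder n f)) by (apply smooth_cont, smooth_nder, Hs).
  destruct (Cs_Dec_Intb s (nder n f)) as [[Hd1 Hd2] Hi]; auto.
  - apply smooth_D, smooth_nder, Hs.
  - apply (smooth_cont _ (smooth_nder (S n) f Hs)).
  - apply (HC (S n)).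
  - repeat split; auto. eapply lim_bnd; eauto.
Qed.

Lemma A_Dec s f : inA s f -> Dec f.
Proof. intro H. apply (A_props s f H 0%nat). Qed.
Lemma A_cont s f : inA s f -> cont f.
Proof. intro H. apply (A_props s f H 0%nat). Qed.
Lemma A_Bnd s f : inA s f -> Bnd f.
Proof. intro H. apply (A_props s f H 0%nat). Qed.
Lemma A_integrable s f : inA s f -> integrable f.
Proof. intro H. destruct (A_props s f H 0%nat) as [_ [Hi [_ Hc]]]. apply Intb_integrable; auto. Qed.
Lemma A_Mc s f : inA s f -> Mc f.
Proof. intro H. split; [eapply A_smooth; eauto|]. intro n. apply (A_props s f H n). Qed.

Lemma inA_ext s f g : (forall x, f x = g x) -> inA s f -> inA s g.
Proof. intros E H. replace g with f; auto. extensionality x; auto. Qed.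

Lemma A_der s f : inA s f -> inA s (der f).
Proof.
  intro H. apply inA_iff in H as [Hs HC]. apply inA_iff.
  split; [apply smooth_der; auto|]. intro n. rewrite <- nder_S. auto.
Qed.

Lemma A_zero s : inA s (fun _ => 0).
Proof.
  apply inA_iff. split; [apply smooth_const|]. intro n. rewrite nder_const. destruct n; apply Cs_zero.
Qed.

Lemma A_plus s f g : inA s f -> inA s g -> inA s (fun x => f x + g x).
Proof.
  intros Hf Hg. pose proof (A_smooth s f Hf). pose proof (A_smooth s g Hg).
  apply inA_iff in Hf as [_ Hf]. apply inA_iff in Hg as [_ Hg].
  apply inA_iff. split; [apply smooth_plus; auto|]. intro n. rewrite nder_plus by auto.
  apply Cs_plus; auto; apply smooth_cont, smooth_nder; auto.
Qed.

Lemma A_mulM s f m : inA s f -> Mc m -> inA s (fun x => f x * m x).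
Proof.
  intros Hf Hm. apply inA_iff. split; [apply smooth_mult; [eapply A_smooth; eauto | apply Hm]|].
  intro n. revert f m Hf Hm. induction n; intros f m Hf Hm.
  - apply Cs_mult; [eapply A_cont; eauto | apply smooth_cont, Hm | apply Mc_Bnd; auto |].
    apply inA_iff in Hf. apply (proj2 Hf 0%nat).
  - pose proof (A_smooth s f Hf) as Hsf. destruct Hm as [Hsm HmB].
    rewrite nder_S, der_mult by (apply smooth_D; auto).
    rewrite nder_plus by (apply smooth_mult; auto using smooth_der).
    apply Cs_plus; try (apply smooth_cont, smooth_nder, smooth_mult; auto using smooth_der).
    + apply IHn; [apply A_der; auto | split; auto].
    + apply IHn; [auto | apply Mc_der; split; auto].
Qed.

Lemma A_mult s f g : inA s f -> inA s g -> inA s (fun x => f x * g x).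
Proof. intros. apply A_mulM; auto. eapply A_Mc; eauto. Qed.
Lemma A_scal s c f : inA s f -> inA s (fun x => c * f x).
Proof. intro H. apply (inA_ext s (fun x => f x * c)); [intro; ring|]. apply A_mulM; auto using Mc_const. Qed.
Lemma A_minus s f g : inA s f -> inA s g -> inA s (fun x => f x - g x).
Proof.
  intros. apply (inA_ext s (fun x => f x + -1 * g x)); [intro; ring|]. apply A_plus; auto using A_scal.
Qed.

Lemma A1_der s X : inA1 s X -> inA s (der X).
Proof. intros [g [Hg [HX _]]]. rewrite (der_fun X g HX). exact Hg. Qed.
Lemma A1_lim s X : inA1 s X -> lim_minf X 0.
Proof. intros [g [_ [_ Hl]]]. exact Hl. Qed.
Lemma A1_smooth s X : inA1 s X -> smooth X.
Proof.
  intros [g [Hg [HX _]]] n. destruct n; [intro x; eauto|].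
  rewrite nder_S, (der_fun X g HX). apply (A_smooth s g Hg).
Qed.

(* They are multipliers: bounded since they have limits at both ends. *)
Lemma A1_Mc s X : inA1 s X -> Mc X.
Proof.
  intro H. pose proof (A1_der s X H) as Hd. pose proof (A1_smooth s X H) as Hs.
  split; auto. intro n. destruct n.
  - destruct (A_integrable s _ Hd) as [l Hl].
    destruct (hasint_prim _ l X Hl (smooth_D_der X Hs)) as [L1 [L2 [H1 [H2 _]]]].
    eapply lim_bnd; eauto. apply smooth_cont; auto.
  - rewrite nder_S. apply (A_Mc s _ Hd).
Qed.

Lemma A_A1 s f : inA s f -> inA1 s f.
Proof.
  intro H. exists (der f). split; [apply A_der; auto|].
  split; [apply smooth_D_der; eapply A_smooth; eauto | apply (A_Dec s f H)].
Qed.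

(** * The metric and its nondegeneracy *)

Lemma Gmet_int s U r Z c : inA1 s U -> inA s r -> inA1 s Z -> inA s c ->
  has_integral (fun x => der U x * der Z x + r x * c x) (Gmet U r Z c).
Proof.
  intros. apply integrable_has, (A_integrable s).
  apply A_plus; apply A_mult; auto; eapply A1_der; eauto.
Qed.

(* Nondegeneracy of the pairing: if [int W Z' + r c = 0] for all test pairs [(Z,c)] in
   [A x A], then [W = r = 0].  Test with [(0, r)], then with [(W', 0)] and integrate by parts. *)
Lemma pairing_nondegenerate s W r : inA s W -> inA s r ->
  (forall Z c, inA s Z -> inA s c -> has_integral (fun x => W x * der Z x + r x * c x) 0) ->
  (forall x, W x = 0) /\ (forall x, r x = 0).
Proof.
  intros HW Hr H. pose proof (A_smooth s W HW) as Hs.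
  assert (DW : forall x, derivable_pt_lim W x (der W x)) by apply (smooth_D_der _ Hs).
  assert (DW' : forall x, derivable_pt_lim (der W) x (der (der W) x))
    by apply (smooth_D_der _ (smooth_der _ Hs)).
  split.
  - assert (HWW : has_integral (fun x => W x * der (der W) x) 0).
    { eapply hasint_ext; [|exact (H _ _ (A_der s _ HW) (A_zero s))]. intro; simpl; ring. }
    assert (Hparts : has_integral (fun x => der W x * der W x + W x * der (der W) x) (0 - 0)).
    { apply (hasint_der (fun x => W x * der W x)); [intro; derive| |];
        [apply lim_minf_mult0 | apply lim_pinf_mult0]; solve [apply (A_Dec s _ HW) | apply (A_Bnd s), A_der, HW]. }
    pose proof (hasint_minus _ _ _ _ Hparts HWW) as HW'2.
    replace (0 - 0 - 0) with 0 in HW'2 by ring.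
    assert (HW'0 : forall x, der W x = 0).
    { apply sq_zero; [apply (A_cont s), A_der, HW|]. eapply hasint_ext; [|exact HW'2]. intro; simpl; ring. }
    apply const_lim0; [intro x; rewrite <- (HW'0 x); apply DW | apply (A_Dec s _ HW)].
  - apply sq_zero; [apply (A_cont s _ Hr)|].
    eapply hasint_ext; [|exact (H _ _ (A_zero s) Hr)]. intro. rewrite der_const. ring.
Qed.

Lemma Gcheck_injective s U r V q : inA1 s U -> inA s r -> inA1 s V -> inA s q ->
  (forall Z c, inA s Z -> inA s c -> Gmet U r Z c = Gmet V q Z c) ->
  (forall x, U x = V x) /\ (forall x, r x = q x).
Proof.
  intros HU Hr HV Hq H.
  destruct (pairing_nondegenerate s (fun x => der U x - der V x) (fun x => r x - q x)) as [H1 H2].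
  - apply A_minus; eapply A1_der; eauto.
  - apply A_minus; auto.
  - intros Z c HZ Hc. pose proof (A_A1 s Z HZ) as HZ1.
    pose proof (hasint_minus _ _ _ _ (Gmet_int s U r Z c HU Hr HZ1 Hc) (Gmet_int s V q Z c HV Hq HZ1 Hc)) as E.
    rewrite H, Rminus_diag in E by auto. eapply hasint_ext; [|exact E]. intro; simpl; ring.
  - split; [|intro x; specialize (H2 x); lra].
    assert (E : forall x, U x - V x = 0).
    { apply const_lim0.
      - intro x. rewrite <- (H1 x). apply derivable_pt_lim_minus; apply smooth_D_der; eapply A1_smooth; eauto.
      - replace 0 with (0 + -1 * 0) by ring. apply (lim_minf_ext (fun x => U x + -1 * V x)); [intro; ring|].
        apply lim_minf_plus; [|apply lim_minf_scal]; eapply A1_lim; eauto. }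
    intro x. specialize (E x). lra.
Qed.

(** * The coadjoint action [ad(X,a)^* Gcheck(X,a) = Gcheck(Y,b)] *)

Section Coadjoint.
Variable s : Aspace.
Variables X a : R -> R.
Hypothesis HX : inA1 s X.
Hypothesis Ha : inA s a.

(* The energy density [X'^2 + a^2] and the components [Y], [b] of the coadjoint vector;
   [Y'] is computed in [Ypf]. *)
Definition qfun := fun y => der X y ^ 2 + a y ^ 2.
Definition Yfun := fun x => / 2 * (der (fun y => X y ^ 2) x - prim qfun x).
Definition Ypf := fun x => X x * der (der X) x + / 2 * der X x ^ 2 - / 2 * a x ^ 2.
Definition bfun := fun x => der a x * X x + a x * der X x.

Let HsX : smooth X := A1_smooth s X HX.
Let DX : forall x, derivable_pt_lim X x (der X x) := smooth_D_der X HsX.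
Let DX' : forall x, derivable_pt_lim (der X) x (der (der X) x) := smooth_D_der _ (smooth_der X HsX).
Let Da : forall x, derivable_pt_lim a x (der a x) := smooth_D_der a (A_smooth s a Ha).

Lemma q_A : inA s qfun.
Proof.
  pose proof (A1_der s X HX). apply (inA_ext s (fun y => der X y * der X y + a y * a y)); [intro; unfold qfun; ring|].
  apply A_plus; apply A_mult; auto.
Qed.

Lemma b_A : inA s bfun.
Proof.
  apply A_plus; [apply A_mulM; [apply A_der, Ha | apply (A1_Mc s), HX]|].
  apply A_mult; [exact Ha | apply (A1_der s), HX].
Qed.

Lemma Ypf_A : inA s Ypf.
Proof.
  pose proof (A1_der s X HX) as HX'. unfold Ypf. apply A_minus; [apply A_plus|].
  - apply (inA_ext s (fun x => der (der X) x * X x)); [intro; ring|]. apply A_mulM; [apply A_der, HX' | apply (A1_Mc s), HX].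
  - apply (inA_ext s (fun x => / 2 * (der X x * der X x))); [intro; ring|]. apply A_scal, A_mult; auto.
  - apply (inA_ext s (fun x => / 2 * (a x * a x))); [intro; ring|]. apply A_scal, A_mult; auto.
Qed.

Lemma Yfun_spec : (forall x, derivable_pt_lim Yfun x (Ypf x)) /\
  lim_minf Yfun 0 /\ lim_pinf Yfun (- / 2 * integral qfun).
Proof.
  destruct (prim_spec qfun) as [P1 [P2 P3]]; [eapply A_cont, q_A | eapply A_integrable, q_A|].
  assert (EY : forall x, Yfun x = der X x * X x + - / 2 * prim qfun x).
  { intro x. unfold Yfun. rewrite (der_pt _ x (2 * X x * der X x)); [field|].
    apply (dval _ _ (der X x * X x + X x * der X x)); [|ring].
    apply (derivable_pt_lim_ext (fun y => X y * X y)); [intro; ring|derive]. }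
  assert (DXX : Dec (fun x => der X x * X x))
    by (apply Dec_mult; [apply (A_Dec s), (A1_der s), HX | apply Mc_Bnd, (A1_Mc s), HX]).
  split; [|split].
  - intro x. apply (derivable_pt_lim_ext (fun x => der X x * X x + - / 2 * prim qfun x)); [intro; symmetry; apply EY|].
    apply (dval _ _ (der (der X) x * X x + der X x * der X x + - / 2 * qfun x)); [derive|].
    unfold Ypf, qfun. field.
  - apply (lim_minf_ext _ _ _ (fun x => eq_sym (EY x))).
    replace 0 with (0 + - / 2 * 0) by ring. apply lim_minf_plus; [apply DXX | apply lim_minf_scal, P2].
  - apply (lim_pinf_ext _ _ _ (fun x => eq_sym (EY x))).
    replace (- / 2 * integral qfun) with (0 + - / 2 * integral qfun) by ring.
    apply lim_pinf_plus; [apply DXX | apply lim_pinf_scal, P3].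
Qed.

Lemma Yfun_A1 : inA1 s Yfun.
Proof. exists Ypf. destruct Yfun_spec as [H1 [H2 _]]. split; [apply Ypf_A | auto]. Qed.

Lemma der_Yfun : der Yfun = Ypf.
Proof. apply der_fun, Yfun_spec. Qed.

(* Integration by parts: [G((X,a), ad(X,a)(Z,c)) = int Ypf Z' + b c + int P'] for a
   boundary term [P] vanishing at both ends. *)
Lemma adstar_by_parts Z c : inA1 s Z -> inA s c ->
  has_integral (adstarG_integrand X a Z c) (Gmet Yfun bfun Z c).
Proof.
  intros HZ Hc. pose proof (A1_smooth s Z HZ) as HsZ.
  assert (DZ := smooth_D_der Z HsZ). assert (DZ' := smooth_D_der _ (smooth_der Z HsZ)).
  assert (Dc := smooth_D_der c (A_smooth s c Hc)).
  set (P := fun x => der X x * (/ 2 * der X x * Z x + -1 * X x * der Z x)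
                   + a x * (/ 2 * a x * Z x + -1 * X x * c x)).
  assert (Ead1 : der (ad1 X a Z c) = fun x => der (der X) x * Z x - X x * der (der Z) x).
  { apply der_fun. intro x. unfold ad1.
    apply (dval _ _ (der (der X) x * Z x + der X x * der Z x - (der X x * der Z x + X x * der (der Z) x)));
      [derive | ring]. }
  assert (DP : forall x, derivable_pt_lim P x
      (adstarG_integrand X a Z c x - (Ypf x * der Z x + bfun x * c x))).
  { intro x. unfold P. eapply dval; [derive|].
    unfold adstarG_integrand, ad2, Ypf, bfun. rewrite Ead1. field. }
  assert (BX := Mc_Bnd _ (A1_Mc s X HX)). assert (BZ := Mc_Bnd _ (A1_Mc s Z HZ)).
  assert (BX' := A_Bnd s _ (A1_der s X HX)). assert (BZ' := A_Bnd s _ (A1_der s Z HZ)).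
  assert (Ba := A_Bnd s a Ha). assert (Bc := A_Bnd s c Hc).
  assert (DecP : Dec P).
  { apply Dec_plus; apply Dec_mult; try solve [apply (A_Dec s), (A1_der s), HX | apply (A_Dec s), Ha];
      repeat first [apply Bnd_plus | apply Bnd_mult | apply Bnd_const | assumption]. }
  destruct DecP as [P1 P2].
  pose proof (hasint_plus _ _ _ _ (Gmet_int s Yfun bfun Z c Yfun_A1 b_A HZ Hc) (hasint_der P _ 0 0 DP P1 P2)) as H.
  rewrite der_Yfun, Rminus_diag, Rplus_0_r in H.
  eapply hasint_ext; [|exact H]. intro x. simpl. ring.
Qed.

Lemma coadjoint_formula Z c : inA1 s Z -> inA s c ->
  integrable (adstarG_integrand X a Z c) /\ adstarG X a Z c = Gmet Yfun bfun Z c.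
Proof.
  intros HZ Hc. pose proof (adstar_by_parts Z c HZ Hc) as H.
  split; [exists (Gmet Yfun bfun Z c); exact H | apply integral_eq, H].
Qed.

End Coadjoint.

(** * The geodesic equation on [Diff_{A_1} x| A]: the two-component Hunter--Saxton system *)

Lemma A1_opp s U : inA1 s U -> inA1 s (fun x => - U x).
Proof.
  intro HU. exists (fun x => -1 * der U x). split; [apply A_scal, (A1_der s), HU|]. split.
  - intro x. apply (dval _ _ (- der U x)); [|ring].
    apply derivable_pt_lim_opp, smooth_D_der, (A1_smooth s), HU.
  - apply (lim_minf_ext (fun x => -1 * U x)); [intro; ring|].
    replace 0 with (-1 * 0) by ring. apply lim_minf_scal, (A1_lim s), HU.
Qed.

(* [Gcheck] is linear; we need it for the sign [v_t = - Gcheck^{-1} ad(v)^* Gcheck(v)]. *)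
Lemma Gmet_opp s U r Z c : inA1 s U -> inA s r -> inA1 s Z -> inA s c ->
  Gmet (fun x => - U x) (fun x => - r x) Z c = - Gmet U r Z c.
Proof.
  intros HU Hr HZ Hc. unfold Gmet at 1. apply integral_eq.
  rewrite (der_fun (fun x => - U x) (fun x => - der U x))
    by (intro; apply derivable_pt_lim_opp, smooth_D_der, (A1_smooth s), HU).
  replace (- Gmet U r Z c) with (-1 * Gmet U r Z c) by ring.
  eapply hasint_ext; [|exact (hasint_scal (-1) _ _ (Gmet_int s U r Z c HU Hr HZ Hc))].
  intro; simpl; ring.
Qed.

Lemma HS_rhs s X a : inA1 s X -> inA s a ->
  (forall x, - Yfun X a x = - X x * der X x + / 2 * prim (fun z => der X z ^ 2 + a z ^ 2) x) /\
  (forall x, - bfun X a x = - der (fun y => a y * X y) x).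
Proof.
  intros HX Ha. pose proof (smooth_D_der X (A1_smooth s X HX)) as DX.
  pose proof (smooth_D_der a (A_smooth s a Ha)) as Da.
  split; intro x.
  - unfold Yfun. rewrite (der_pt _ x (2 * X x * der X x)); [unfold qfun; field|].
    apply (dval _ _ (der X x * X x + X x * der X x)); [|ring].
    apply (derivable_pt_lim_ext (fun y => X y * X y)); [intro; ring|derive].
  - rewrite (der_pt _ x (bfun X a x)); [reflexivity|]. unfold bfun. derive.
Qed.

Lemma geodesic_equation s X a U r : inA1 s X -> inA s a -> inA1 s U -> inA s r ->
  ((forall Z c, inA1 s Z -> inA s c -> Gmet U r Z c = - adstarG X a Z c) <->
   (forall x, U x = - X x * der X x + / 2 * prim (fun z => der X z ^ 2 + a z ^ 2) x /\
              r x = - der (fun y => a y * X y) x)).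
Proof.
  intros HX Ha HU Hr. destruct (HS_rhs s X a HX Ha) as [EY Eb].
  assert (HYb : forall Z c, inA1 s Z -> inA s c ->
    - adstarG X a Z c = Gmet (fun x => - Yfun X a x) (fun x => - bfun X a x) Z c).
  { intros Z c HZ Hc. rewrite (Gmet_opp s), (proj2 (coadjoint_formula s X a HX Ha Z c HZ Hc)); auto.
    apply Yfun_A1; auto. apply b_A; auto. }
  split.
  - intro H. destruct (Gcheck_injective s U r (fun x => - Yfun X a x) (fun x => - bfun X a x)) as [E1 E2];
      auto using A1_opp, Yfun_A1.
    + apply (inA_ext s (fun x => -1 * bfun X a x)); [intro; ring|]. apply A_scal, b_A; auto.
    + intros Z c HZ Hc. rewrite <- HYb by auto using A_A1. apply H; auto using A_A1.
    + intro x. rewrite E1, E2, EY, Eb. auto.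
  - intros H Z c HZ Hc. rewrite HYb by auto.
    f_equal; extensionality x; destruct (H x) as [H1 H2]; [rewrite EY | rewrite Eb]; auto.
Qed.

(** * On [Diff_A x| A] the geodesic equation does not exist *)

(* If [ad(X,a)^* Gcheck(X,a) = Gcheck(Y,b)] with [Y] in [A], injectivity forces [Y] to be
   the [Y] of the coadjoint formula; its limit [-(1/2) int (X'^2 + a^2)] at +oo must then
   vanish, so [X' = a = 0] and [X = 0]. *)
Lemma no_geodesic_equation s X a : inA s X -> inA s a -> (exists x, X x <> 0 \/ a x <> 0) ->
  ~ exists Y b, inA s Y /\ inA s b /\
      forall Z c, inA s Z -> inA s c -> adstarG X a Z c = Gmet Y b Z c.
Proof.
  intros HXA Ha [x0 Hx0] [Y [b [HY [Hb H]]]].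
  pose proof (A_A1 s X HXA) as HX.
  destruct (Gcheck_injective s Y b (Yfun X a) (bfun X a)) as [EY _]; auto using A_A1, Yfun_A1, b_A.
  { intros Z c HZ Hc. rewrite <- H by auto. apply (coadjoint_formula s); auto using A_A1. }
  destruct (Yfun_spec s X a HX Ha) as [_ [_ Hlim]].
  assert (Hint : integral (qfun X a) = 0).
  { assert (- / 2 * integral (qfun X a) = 0); [|lra].
    eapply lim_pinf_unique; [exact Hlim|]. apply (lim_pinf_ext Y); [exact EY | apply (A_Dec s _ HY)]. }
  assert (Hq0 : forall x, qfun X a x = 0).
  { pose proof (q_A s X a HX Ha) as Hq. apply nonneg_zero; [eapply A_cont; eauto | intro; unfold qfun; nra|].
    rewrite <- Hint. apply integrable_has. eapply A_integrable; eauto. }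
  assert (HX0 : forall x, X x = 0).
  { apply const_lim0; [|apply (A_Dec s _ HXA)]. intro x. specialize (Hq0 x). unfold qfun in Hq0.
    apply (dval _ _ (der X x)); [apply smooth_D_der, (A_smooth s), HXA | nra]. }
  specialize (Hq0 x0). unfold qfun in Hq0. specialize (HX0 x0). destruct Hx0; [contradiction | nra].
Qed.

Theorem mainTheorem10 (s : Aspace) :
  (* (1) the coadjoint formula, with (Y,b) in A_1 x A *)
  (forall X a, inA1 s X -> inA s a ->
     let Y := fun x => / 2 * (der (fun y => X y ^ 2) x
                              - prim (fun y => der X y ^ 2 + a y ^ 2) x) in
     let b := fun x => der a x * X x + a x * der X x in
     inA1 s Y /\ inA s b /\
     forall Z c, inA1 s Z -> inA s c ->
       integrable (adstarG_integrand X a Z c) /\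
       adstarG X a Z c = Gmet Y b Z c) /\
  (* (2) on Diff_{A_1} x| A the geodesic equation is the two-component Hunter--Saxton system *)
  (forall (u rho ut rhot : R -> R -> R),
     (forall t, inA1 s (u t)) -> (forall t, inA s (rho t)) ->
     (forall t, inA1 s (ut t)) -> (forall t, inA s (rhot t)) ->
     (forall t x, derivable_pt_lim (fun t' => u t' x) t (ut t x)) ->
     (forall t x, derivable_pt_lim (fun t' => rho t' x) t (rhot t x)) ->
     ((forall t Z c, inA1 s Z -> inA s c ->
         Gmet (ut t) (rhot t) Z c = - adstarG (u t) (rho t) Z c)
      <->
      (forall t x,
         ut t x = - u t x * der (u t) x
                  + / 2 * prim (fun z => der (u t) z ^ 2 + rho t z ^ 2) x /\
         rhot t x = - der (fun y => rho t y * u t y) x))) /\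
  (* (3) on Diff_A x| A the geodesic equation does not exist *)
  (forall X a, inA s X -> inA s a -> (exists x, X x <> 0 \/ a x <> 0) ->
     ~ exists Y b, inA s Y /\ inA s b /\
         forall Z c, inA s Z -> inA s c -> adstarG X a Z c = Gmet Y b Z c).
Proof.
  split; [|split].
  - intros X a HX Ha. exact (conj (Yfun_A1 s X a HX Ha)
      (conj (b_A s X a HX Ha) (coadjoint_formula s X a HX Ha))).
  - intros u rho ut rhot Hu Hr Hut Hrt _ _.
    pose proof (fun t => geodesic_equation s (u t) (rho t) (ut t) (rhot t) (Hu t) (Hr t) (Hut t) (Hrt t)) as E.
    split; intros H t; apply E; auto.
  - apply no_geodesic_equation.
Qed.
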